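(* Let $\nabla$ be an ES basic fusion operator and $\Phi\mapsto\succeq_\Phi$ the unique basic assignment with $[\![B(\nabla(\Phi,E))]\!]=\max([\![B(E)]\!],\succeq_\Phi)$ for all $\Phi,E$. Then: (i) $\nabla$ satisfies (ESF5) iff the assignment satisfies Property 1; (ii) $\nabla$ satisfies (ESF6) iff it satisfies Property 2; (iii) $\nabla$ satisfies (ESF7) iff it satisfies Property 3; (iv) $\nabla$ satisfies (ESF8) iff it satisfies Property 4; (v) $\nabla$ satisfies (ESF8W) iff it satisfies Property 4'.
   Context: Setting: an epistemic space $(\mathcal E,B,\mathcal L_{\mathcal P})$ ($\mathcal E$ nonempty, $B:\mathcal E\to\mathcal L_{\mathcal P}$ with image modulo equivalence exactly the consistent formulas over the finite variable set $\mathcal P$; $\mathcal W_{\mathcal P}$ the valuations, $[\![\phi]\!]$ models of $\phi$); agents form a well-ordered set $\mathcal S$; a society is a nonempty finite $N\subseteq\mathcal S$; an $N$-profile is $\Phi:N\to\mathcal E$ with $E_i=\Phi(i)$ (for $N=\{i\}$ identified with $E_i$); $\Phi\upharpoonright_M$ is restriction to nonempty $M\subseteq N$; a partition $\{N_1,N_2\}$ of $N$ consists of two nonempty disjoint sets with union $N$. An ES combination operator maps (profile, epistemic state) to an epistemic state; an ES basic fusion operator satisfies (ESF1) $B(\nabla(\Phi,E))\vdash B(E)$; (ESF2) equivalent profiles (same length, same entries in increasing order of agents) and equivalent $B(E)\equiv B(E')$ give equivalent $B(\nabla(\cdot,\cdot))$; (ESF3) if $B(E)\equiv B(E')\wedge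 B(E'')$ then $B(\nabla(\Phi,E'))\wedge B(E'')\vdash B(\nabla(\Phi,E))$; (ESF4) under the same hypothesis, if moreover $B(\nabla(\Phi,E'))\wedge B(E'')\nvdash\bot$ then $B(\nabla(\Phi,E))\vdash B(\nabla(\Phi,E'))\wedge B(E'')$. Postulates (for agents $j,k$, society $N$, partition $\{N_1,N_2\}$, $N$-profile $\Phi$, $E\in\mathcal E$): (ESF5) if $E_j\ne E_k$ there is $E'$ with $B(\nabla(E_j,E'))\not\equiv B(\nabla(E_k,E'))$; (ESF6) if $\bigwedge_{i\in N}B(E_i)\wedge B(E)\nvdash\bot$ then $B(\nabla(\Phi,E))\equiv\bigwedge_{i\in N}B(E_i)\wedge B(E)$; (ESF7) $B(\nabla(\Phi\upharpoonright_{N_1},E))\wedge B(\nabla(\Phi\upharpoonright_{N_2},E))\vdash B(\nabla(\Phi,E))$; (ESF8) if $B(\nabla(\Phi\upharpoonright_{N_1},E))\wedge B(\nabla(\Phi\upharpoonright_{N_2},E))\nvdash\bot$ then $B(\nabla(\Phi,E))\vdash B(\nabla(\Phi\upharpoonright_{N_1},E))\wedge B(\nabla(\Phi\upharpoonright_{N_2},E))$; (ESF8W) same hypothesis, conclusion $B(\nabla(\Phi,E))\vdash B(\nabla(\Phi\upharpoonright_{N_1},E))\vee B(\nabla(\Phi\upharpoonright_{N_2},E))$. Properties of an assignment $\Phi\mapsto\succeq_\Phi$ (total preorders on $\mathcal W_{\mathcal P}$, $\succ$ strict part), for all such data and interpretations $w,w'$: (1) if $E_j\ne E_k$ then $\succeq_{E_j}\ne\succeq_{E_k}$;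 (2) if $\bigwedge_{i\in N}B(E_i)\nvdash\bot$ then $[\![\bigwedge_{i\in N}B(E_i)]\!]=\max(\succeq_\Phi)$ (the set of $\succeq_\Phi$-maximal valuations); (3) if $w\succeq_{\Phi\upharpoonright_{N_1}}w'$ and $w\succeq_{\Phi\upharpoonright_{N_2}}w'$ then $w\succeq_\Phi w'$; (4) if $w\succeq_{\Phi\upharpoonright_{N_1}}w'$ and $w\succ_{\Phi\upharpoonright_{N_2}}w'$ then $w\succ_\Phi w'$; (4') if $w\succ_{\Phi\upharpoonright_{N_1}}w'$ and $w\succ_{\Phi\upharpoonright_{N_2}}w'$ then $w\succ_\Phi w'$. $\max(C,\succeq)=\{c\in C: c\succeq x\ \forall x\in C\}$. *)

From HB Require Import structures.
From mathcomp Require Import all_boot all_order.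
Set Implicit Arguments. Unset Strict Implicit. Unset Printing Implicit Defensive.
Import Order.TTheory.

Inductive form (P : Type) : Type :=
| FVar of P
| FBot
| FTop
| FNeg of form P
| FAnd of form P & form P
| FOr of form P & form P
| FImp of form P & form P.
Arguments FBot {P}. Arguments FTop {P}.

Definition valuation (P : finType) := {ffun P -> bool}.

Fixpoint sat (P : finType) (w : valuation P) (f : form P) : bool :=
  match f with
  | FVar p => w p
  | FBot => false
  | FTop => true
  | FNeg g => ~~ sat w g
  | FAnd g h => sat w g && sat w h
  | FOr g h => sat w g || sat w h
  | FImp g h => sat w g ==> sat w h
  end.

Definition models (P : finType) (f : form P) : pred (valuation P) := fun w => sat w f.
Definition entails (P : finType) (f g : form P) : Prop := forall w, sat w f -> sat w g.
Definition fequiv (P : finType) (f g : form P) : Prop := entails f g /\ entails g f.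
Definition consistent (P : finType) (f : form P) : Prop := ~ entails f FBot.
Definition bigAnd (P : finType) (s : seq (form P)) : form P := foldr (@FAnd P) FTop s.

Definition epistemic_space (P : finType) (E : Type) (B : E -> form P) : Prop :=
  inhabited E /\
  (forall e, consistent (B e)) /\
  (forall f, consistent f -> exists e, fequiv (B e) f).

(* A profile Phi : N -> E is represented by its graph, listed in strictly
   increasing order of agents; N is the list of its first components. *)
Definition is_profile d (S : orderType d) (E : Type) (Phi : seq (S * E)) : Prop :=
  Phi <> [::] /\ sorted (fun p q : S * E => (p.1 < q.1)%O) Phi.

Definition society d (S : orderType d) (E : Type) (Phi : seq (S * E)) : seq S :=
  map fst Phi.

Definition states d (S : orderType d) (E : Type) (Phi : seq (S * E)) : seq E :=
  map snd Phi.

Definition restr d (S : orderType d) (E : Type) (Phi : seq (S * E)) (M : seq S)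
  : seq (S * E) := [seq p <- Phi | p.1 \in M].

Definition is_partition d (S : orderType d) (N N1 N2 : seq S) : Prop :=
  [/\ N1 != [::], N2 != [::],
      (forall i, (i \in N) = (i \in N1) || (i \in N2)) &
      (forall i, i \in N1 -> i \notin N2)].

Definition prof_equiv d (S : orderType d) (E : Type) (Phi Phi' : seq (S * E)) : Prop :=
  size Phi = size Phi' /\ states Phi = states Phi'.

Definition conjB (P : finType) d (S : orderType d) (E : Type) (B : E -> form P)
  (Phi : seq (S * E)) : form P := bigAnd (map B (states Phi)).

Section Fusion.
Variables (P : finType) (E : Type) (d : Order.disp_t) (S : orderType d).
Variables (B : E -> form P) (nabla : seq (S * E) -> E -> E).

Definition ESF1 := forall Phi e, is_profile Phi -> entails (B (nabla Phi e)) (B e).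
Definition ESF2 := forall Phi Phi' e e', is_profile Phi -> is_profile Phi' ->
  prof_equiv Phi Phi' -> fequiv (B e) (B e') ->
  fequiv (B (nabla Phi e)) (B (nabla Phi' e')).
Definition ESF3 := forall Phi e e' e'', is_profile Phi ->
  fequiv (B e) (FAnd (B e') (B e'')) ->
  entails (FAnd (B (nabla Phi e')) (B e'')) (B (nabla Phi e)).
Definition ESF4 := forall Phi e e' e'', is_profile Phi ->
  fequiv (B e) (FAnd (B e') (B e'')) ->
  consistent (FAnd (B (nabla Phi e')) (B e'')) ->
  entails (B (nabla Phi e)) (FAnd (B (nabla Phi e')) (B e'')).

Definition ES_basic_fusion := [/\ ESF1, ESF2, ESF3 & ESF4].

Definition ESF5 := forall (j k : S) (ej ek : E), ej <> ek ->
  exists e', ~ fequiv (B (nabla [:: (j, ej)] e')) (B (nabla [:: (k, ek)] e')).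
Definition ESF6 := forall Phi e, is_profile Phi ->
  consistent (FAnd (conjB B Phi) (B e)) ->
  fequiv (B (nabla Phi e)) (FAnd (conjB B Phi) (B e)).
Definition ESF7 := forall Phi N1 N2 e, is_profile Phi ->
  is_partition (society Phi) N1 N2 ->
  entails (FAnd (B (nabla (restr Phi N1) e)) (B (nabla (restr Phi N2) e)))
          (B (nabla Phi e)).
Definition ESF8 := forall Phi N1 N2 e, is_profile Phi ->
  is_partition (society Phi) N1 N2 ->
  consistent (FAnd (B (nabla (restr Phi N1) e)) (B (nabla (restr Phi N2) e))) ->
  entails (B (nabla Phi e))
          (FAnd (B (nabla (restr Phi N1) e)) (B (nabla (restr Phi N2) e))).
Definition ESF8W := forall Phi N1 N2 e, is_profile Phi ->
  is_partition (society Phi) N1 N2 ->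
  consistent (FAnd (B (nabla (restr Phi N1) e)) (B (nabla (restr Phi N2) e))) ->
  entails (B (nabla Phi e))
          (FOr (B (nabla (restr Phi N1) e)) (B (nabla (restr Phi N2) e))).
End Fusion.

Definition total_preorder (T : Type) (R : rel T) : Prop :=
  (forall x y, R x y || R y x) /\ transitive R.

Definition strict (T : Type) (R : rel T) : rel T := fun x y => R x y && ~~ R y x.

Definition maxset (T : finType) (C : pred T) (R : rel T) : pred T :=
  fun c => C c && [forall x, C x ==> R c x].

Section Assign.
Variables (P : finType) (E : Type) (d : Order.disp_t) (S : orderType d).
Variables (B : E -> form P) (pre : seq (S * E) -> rel (valuation P)).

Definition Prop1 := forall (j k : S) (ej ek : E), ej <> ek ->
  pre [:: (j, ej)] <> pre [:: (k, ek)].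
Definition Prop2 := forall Phi, is_profile Phi -> consistent (conjB B Phi) ->
  models (conjB B Phi) =i maxset predT (pre Phi).
Definition Prop3 := forall Phi N1 N2 w w', is_profile Phi ->
  is_partition (society Phi) N1 N2 ->
  pre (restr Phi N1) w w' -> pre (restr Phi N2) w w' -> pre Phi w w'.
Definition Prop4 := forall Phi N1 N2 w w', is_profile Phi ->
  is_partition (society Phi) N1 N2 ->
  pre (restr Phi N1) w w' -> strict (pre (restr Phi N2)) w w' -> strict (pre Phi) w w'.
Definition Prop4' := forall Phi N1 N2 w w', is_profile Phi ->
  is_partition (society Phi) N1 N2 ->
  strict (pre (restr Phi N1)) w w' -> strict (pre (restr Phi N2)) w w' ->
  strict (pre Phi) w w'.
End Assign.

Definition represents (P : finType) (E : Type) d (S : orderType d)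
  (B : E -> form P) (nabla : seq (S * E) -> E -> E)
  (pre : seq (S * E) -> rel (valuation P)) : Prop :=
  (forall Phi, is_profile Phi -> total_preorder (pre Phi)) /\
  (forall Phi e, is_profile Phi ->
     models (B (nabla Phi e)) =i maxset (models (B e)) (pre Phi)).

(* Every formula is the belief base of some epistemic state, in particular the
   formula whose only models are two given worlds w and w'.  Fusing such a
   state under a profile Phi keeps w exactly when w >=_Phi w', so testing each
   fusion postulate on two-world states yields the corresponding property of
   the preorders.  Conversely, the properties of the preorders give the
   postulates by comparing maximal worlds: when the fusions under the two parts
   of a partition are jointly consistent, a common model c of both is maximal
   for both restricted preorders, and every world maximal for Phi is compared
   with c. *)

From mathcomp Require Import all_boot all_order.
From Stdlib Require Import Classical FunctionalExtensionality.
Import Order.TTheory.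
Set Implicit Arguments. Unset Strict Implicit.

Section Formulas.
Variable P : finType.

Lemma consistent_sat (f : form P) : consistent f -> exists w, sat w f.
Proof.
move=> hc; apply: NNPP => hn; apply: hc => w hw; exfalso; apply: hn.
by exists w.
Qed.

Lemma fequiv_sat (f g : form P) : fequiv f g <-> forall v, sat v f = sat v g.
Proof.
split=> [[hfg hgf] v|h]; first by apply/idP/idP; [exact: hfg | exact: hgf].
by split=> v; rewrite h.
Qed.

Definition literal (w : valuation P) (p : P) : form P :=
  if w p then FVar p else FNeg (FVar p).

Definition char_form (w : valuation P) : form P :=
  bigAnd (map (literal w) (enum P)).

Lemma sat_char_form (v w : valuation P) : sat v (char_form w) = (v == w).
Proof.
have ->: sat v (char_form w) = all (fun p => v p == w p) (enum P).
  rewrite /char_form /bigAnd; elim: (enum P) => //= p s ->.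
  by rewrite /literal; case: (w p) => /=; case: (v p).
apply/allP/eqP => [h|->]; last by move=> p _.
by apply/ffunP => p; apply/eqP; apply: h; rewrite mem_enum.
Qed.

End Formulas.

Section MaximalElements.
Variables (T : finType) (C : pred T) (R : rel T).

Lemma maxsetP c : reflect (C c /\ forall x, C x -> R c x) (maxset C R c).
Proof.
rewrite /maxset; apply: (iffP andP) => [[hc /forallP h]|[hc h]]; split => //.
  by move=> x /(implyP (h x)).
by apply/forallP => x; apply/implyP; apply: h.
Qed.

Lemma maxset_lift c v :
  transitive R -> maxset C R c -> C v -> R v c -> maxset C R v.
Proof.
move=> trR /maxsetP [_ hc] hv hvc; apply/maxsetP; split => // x hx.
exact: trR hvc (hc x hx).
Qed.

Lemma maxset_pair w w' :
  reflexive R -> (forall v, C v = (v == w) || (v == w')) ->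
  maxset C R w = R w w'.
Proof.
move=> reflR hC; apply/maxsetP/idP => [[_ h]|h].
  by apply: h; rewrite hC eqxx orbT.
split; first by rewrite hC eqxx.
by move=> x; rewrite hC => /orP [] /eqP ->.
Qed.

Lemma strict_total x y :
  (forall a b, R a b || R b a) -> strict R x y = ~~ R y x.
Proof. by move=> totR; rewrite /strict; have := totR x y; case: (R x y); case: (R y x). Qed.

End MaximalElements.

Section Profiles.
Variables (E : Type) (d : Order.disp_t) (S : orderType d).

Lemma profile1 (j : S) (e : E) : is_profile [:: (j, e)].
Proof. by split. Qed.

Lemma is_partition_sym (N N1 N2 : seq S) :
  is_partition N N1 N2 -> is_partition N N2 N1.
Proof.
case=> h1 h2 hN hd; split => // [i|i hi]; first by rewrite orbC.
by apply/negP => hi1; move: (hd i hi1); rewrite hi.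
Qed.

Lemma restr_profile (Phi : seq (S * E)) N1 N2 :
  is_profile Phi -> is_partition (society Phi) N1 N2 -> is_profile (restr Phi N1).
Proof.
case=> hne hs [h1 _ hN _]; split; last first.
  by apply: sorted_filter => //; move=> x y z; exact: lt_trans.
case: N1 h1 hN => // i N1' _ hN.
have hi : i \in society Phi by rewrite hN mem_head.
have : i \in [seq j <- society Phi | j \in i :: N1'] by rewrite mem_filter mem_head hi.
by rewrite /society filter_map -/(restr Phi (i :: N1')) => /[swap] ->.
Qed.

Lemma restr_profiles (Phi : seq (S * E)) N1 N2 :
  is_profile Phi -> is_partition (society Phi) N1 N2 ->
  is_profile (restr Phi N1) /\ is_profile (restr Phi N2).
Proof.
move=> hP hpart; split; first exact: restr_profile hpart.
exact: restr_profile (is_partition_sym hpart).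
Qed.

End Profiles.

Section EpistemicSpace.
Variables (P : finType) (E : Type) (B : E -> form P).
Hypothesis hES : epistemic_space B.

Lemma belief_realized (f : form P) w0 :
  sat w0 f -> exists e, forall v, sat v (B e) = sat v f.
Proof.
move=> h0; case: hES => _ [_ hB].
have [e /fequiv_sat He] : exists e, fequiv (B e) f.
  by apply: hB => hf; move: (hf w0 h0).
by exists e.
Qed.

Lemma pair_belief (w w' : valuation P) :
  exists e, forall v, sat v (B e) = (v == w) || (v == w').
Proof.
have [e He] := @belief_realized (FOr (char_form w) (char_form w')) w
  ltac:(by rewrite /= sat_char_form eqxx).
by exists e => v; rewrite He /= !sat_char_form.
Qed.

Lemma top_belief : exists e, forall v, sat v (B e).
Proof.
have [e He] := @belief_realized FTop [ffun=> true] isT.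
by exists e => v; rewrite He.
Qed.

End EpistemicSpace.

Section Representation.
Variables (P : finType) (E : Type) (d : Order.disp_t) (S : orderType d).
Variables (B : E -> form P) (nabla : seq (S * E) -> E -> E)
  (pre : seq (S * E) -> rel (valuation P)).
Hypothesis hrep : represents B nabla pre.

Lemma pre_total Phi : is_profile Phi -> forall w w', pre Phi w w' || pre Phi w' w.
Proof. by move=> hP; case: (hrep.1 Phi hP). Qed.

Lemma pre_trans Phi : is_profile Phi -> transitive (pre Phi).
Proof. by move=> hP; case: (hrep.1 Phi hP). Qed.

Lemma pre_refl Phi : is_profile Phi -> reflexive (pre Phi).
Proof. by move=> hP w; have := pre_total hP w w; rewrite orbb. Qed.

Lemma sat_fusion Phi e v : is_profile Phi ->
  sat v (B (nabla Phi e)) = maxset (models (B e)) (pre Phi) v.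
Proof. by move=> hP; apply: (hrep.2 Phi e hP v). Qed.

Lemma sat_fusionP Phi e v : is_profile Phi ->
  reflect (sat v (B e) /\ forall x, sat x (B e) -> pre Phi v x)
          (sat v (B (nabla Phi e))).
Proof. by move=> hP; rewrite sat_fusion //; apply: maxsetP. Qed.

Lemma sat_fusion_lift Phi e c v : is_profile Phi -> sat c (B (nabla Phi e)) ->
  sat v (B e) -> pre Phi v c -> sat v (B (nabla Phi e)).
Proof.
move=> hP; rewrite !sat_fusion //; apply: maxset_lift; exact: pre_trans.
Qed.

Lemma sat_fusion_pair Phi e w w' : is_profile Phi ->
  (forall v, sat v (B e) = (v == w) || (v == w')) ->
  sat w (B (nabla Phi e)) = pre Phi w w' /\ sat w' (B (nabla Phi e)) = pre Phi w' w.
Proof.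
move=> hP hB; rewrite !sat_fusion //.
split; apply: maxset_pair (pre_refl hP) _ => // v; rewrite /models hB //.
exact: orbC.
Qed.

(* If the fusions under both parts share the model c, then under Prop4 every
   world maximal for Phi is maximal for the second part: otherwise c would be
   strictly better for the second part and at least as good for the first. *)
Lemma Prop4_fusion_sub Phi N1 N2 e c v :
  Prop4 pre -> is_profile Phi -> is_partition (society Phi) N1 N2 ->
  sat c (B (nabla (restr Phi N1) e)) -> sat c (B (nabla (restr Phi N2) e)) ->
  sat v (B (nabla Phi e)) -> sat v (B (nabla (restr Phi N2) e)).
Proof.
move=> h4 hP hpart hc1 hc2 hv.
have [hP1 hP2] := restr_profiles hP hpart.
have [hvB hvmax] := elimT (sat_fusionP _ _ hP) hv.
have [hcB hcmax1] := elimT (sat_fusionP _ _ hP1) hc1.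
case hvc: (pre (restr Phi N2) v c); first exact: sat_fusion_lift hc2 hvB hvc.
have hcv : strict (pre (restr Phi N2)) c v by rewrite strict_total ?hvc //; exact: pre_total.
have := h4 Phi N1 N2 c v hP hpart (hcmax1 v hvB) hcv.
by rewrite strict_total ?hvmax //; exact: pre_total.
Qed.

Lemma Prop4'_fusion_sub Phi N1 N2 e c v :
  Prop4' pre -> is_profile Phi -> is_partition (society Phi) N1 N2 ->
  sat c (B (nabla (restr Phi N1) e)) -> sat c (B (nabla (restr Phi N2) e)) ->
  sat v (B (nabla Phi e)) ->
  sat v (B (nabla (restr Phi N1) e)) || sat v (B (nabla (restr Phi N2) e)).
Proof.
move=> h4 hP hpart hc1 hc2 hv.
have [hP1 hP2] := restr_profiles hP hpart.
have [hvB hvmax] := elimT (sat_fusionP _ _ hP) hv.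
have [hcB _] := elimT (sat_fusionP _ _ hP1) hc1.
case hvc1: (pre (restr Phi N1) v c); first by rewrite (sat_fusion_lift hP1 hc1 hvB hvc1).
case hvc2: (pre (restr Phi N2) v c); first by rewrite (sat_fusion_lift hP2 hc2 hvB hvc2) orbT.
have [hcv1 hcv2] : strict (pre (restr Phi N1)) c v /\ strict (pre (restr Phi N2)) c v.
  by rewrite !strict_total ?hvc1 ?hvc2 //; exact: pre_total.
have := h4 Phi N1 N2 c v hP hpart hcv1 hcv2.
by rewrite strict_total ?hvmax //; exact: pre_total.
Qed.

Hypothesis hES : epistemic_space B.

Lemma ESF5_Prop1 : ESF5 B nabla <-> Prop1 pre.
Proof.
split=> [h5 j k ej ek hne hpre|h1 j k ej ek hne].
  have [e' He'] := h5 j k ej ek hne; apply: He'; apply/fequiv_sat => v.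
  by rewrite !sat_fusion ?hpre //; exact: profile1.
apply: NNPP => hn; apply: (h1 j k ej ek hne).
apply: functional_extensionality => w; apply: functional_extensionality => w'.
have [e He] := pair_belief hES w w'.
have [hj _] := sat_fusion_pair (profile1 j ej) He.
have [hk _] := sat_fusion_pair (profile1 k ek) He.
rewrite -hj -hk; apply: (fequiv_sat _ _).1.
by apply: NNPP => hx; apply: hn; exists e.
Qed.

Lemma ESF6_Prop2 : ESF6 B nabla <-> Prop2 B pre.
Proof.
split=> [h6 Phi hP hc v|h2 Phi e hP hc].
  have [e0 He0] := top_belief hES.
  have hc0 : consistent (FAnd (conjB B Phi) (B e0)).
    by move=> hb; apply: hc => w hw; apply: hb; rewrite /= hw He0.
  have /fequiv_sat h := h6 Phi e0 hP hc0.
  change (sat v (conjB B Phi) = maxset predT (pre Phi) v).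
  have -> : maxset predT (pre Phi) v = sat v (B (nabla Phi e0)).
    rewrite sat_fusion //; apply/maxsetP/maxsetP => -[_ hv]; split=> [|x _];
      rewrite /models ?He0 //; by apply: hv; rewrite /models ?He0.
  by rewrite h /= He0 andbT.
have [w0 /= /andP [hw0 hw0e]] := consistent_sat hc.
have hPhi : forall v, sat v (conjB B Phi) = maxset predT (pre Phi) v.
  by apply: h2 => // hb; move: (hb w0 hw0).
have hglobal v : sat v (conjB B Phi) -> forall x, pre Phi v x.
  by rewrite hPhi => /maxsetP [_ hv] x; exact: hv.
apply/fequiv_sat => v; rewrite sat_fusion //=.
apply/maxsetP/andP => [[hv hvmax]|[hv hve]]; last by split=> // x _; exact: hglobal.
split=> //; rewrite hPhi; apply/maxsetP; split=> // x _.
exact: pre_trans hP _ _ _ (hvmax w0 hw0e) (hglobal w0 hw0 x).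
Qed.

Lemma ESF7_Prop3 : ESF7 B nabla <-> Prop3 pre.
Proof.
split=> [h7 Phi N1 N2 w w' hP hpart h1 h2|h3 Phi N1 N2 e hP hpart v /= /andP []].
  have [hP1 hP2] := restr_profiles hP hpart.
  have [e He] := pair_belief hES w w'.
  have [<- _] := sat_fusion_pair hP He.
  apply: (h7 Phi N1 N2 e hP hpart).
  by rewrite /= (sat_fusion_pair hP1 He).1 (sat_fusion_pair hP2 He).1 h1 h2.
have [hP1 hP2] := restr_profiles hP hpart.
move=> /(sat_fusionP _ _ hP1) [hv hvmax1] /(sat_fusionP _ _ hP2) [_ hvmax2].
apply/(sat_fusionP _ _ hP); split=> // x hx.
exact: h3 hpart (hvmax1 x hx) (hvmax2 x hx).
Qed.

Lemma ESF8_Prop4 : ESF8 B nabla <-> Prop4 pre.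
Proof.
split=> [h8 Phi N1 N2 w w' hP hpart h1 /andP [h2 h2n]|h4 Phi N1 N2 e hP hpart hc v hv].
  have [hP1 hP2] := restr_profiles hP hpart.
  have [e He] := pair_belief hES w w'.
  have [hw1 _] := sat_fusion_pair hP1 He.
  have [hw2 hw'2] := sat_fusion_pair hP2 He.
  have [_ hw'] := sat_fusion_pair hP He.
  rewrite strict_total; last exact: pre_total.
  apply/negP => hw'w.
  have hc : consistent (FAnd (B (nabla (restr Phi N1) e)) (B (nabla (restr Phi N2) e))).
    by move=> /(_ w); rewrite /= hw1 hw2 h1 h2 => /(_ isT).
  by move: (h8 Phi N1 N2 e hP hpart hc w'); rewrite /= hw' hw'2 (negbTE h2n) andbF => /(_ hw'w).
have [c /= /andP [hc1 hc2]] := consistent_sat hc.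
apply/andP; split; last exact: Prop4_fusion_sub hc1 hc2 hv.
exact: Prop4_fusion_sub (is_partition_sym hpart) hc2 hc1 hv.
Qed.

Lemma ESF8W_Prop4' : ESF8W B nabla <-> Prop4' pre.
Proof.
split=> [h8 Phi N1 N2 w w' hP hpart /andP [h1 h1n] /andP [h2 h2n]|].
  have [hP1 hP2] := restr_profiles hP hpart.
  have [e He] := pair_belief hES w w'.
  have [hw1 hw'1] := sat_fusion_pair hP1 He.
  have [hw2 hw'2] := sat_fusion_pair hP2 He.
  have [_ hw'] := sat_fusion_pair hP He.
  rewrite strict_total; last exact: pre_total.
  apply/negP => hw'w.
  have hc : consistent (FAnd (B (nabla (restr Phi N1) e)) (B (nabla (restr Phi N2) e))).
    by move=> /(_ w); rewrite /= hw1 hw2 h1 h2 => /(_ isT).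
  move: (h8 Phi N1 N2 e hP hpart hc w').
  by rewrite /= hw' hw'1 hw'2 (negbTE h1n) (negbTE h2n) => /(_ hw'w).
move=> h4 Phi N1 N2 e hP hpart hc v hv.
have [c /= /andP [hc1 hc2]] := consistent_sat hc.
exact: Prop4'_fusion_sub hc1 hc2 hv.
Qed.

End Representation.

Theorem mainTheorem3 (P : finType) (E : Type) (d : Order.disp_t) (S : orderType d)
  (B : E -> form P) (nabla : seq (S * E) -> E -> E)
  (pre : seq (S * E) -> rel (valuation P)) :
  well_founded (fun x y : S => (x < y)%O) ->
  epistemic_space B ->
  ES_basic_fusion B nabla ->
  represents B nabla pre ->
  [/\ ESF5 B nabla <-> Prop1 pre,
      ESF6 B nabla <-> Prop2 B pre,
      ESF7 B nabla <-> Prop3 pre,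
      ESF8 B nabla <-> Prop4 pre &
      ESF8W B nabla <-> Prop4' pre].
Proof.
move=> _ hES _ hrep; split.
- exact: ESF5_Prop1.
- exact: ESF6_Prop2.
- exact: ESF7_Prop3.
- exact: ESF8_Prop4.
- exact: ESF8W_Prop4'.
Qed.
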